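(* Let $b(r),h(r)$ be smooth positive functions on an interval of $r>0$ and consider the metric $ds^2=-b^2dt^2+\dfrac{h^2}{b^2}dr^2+r^2(d\theta^2+\sin^2\theta\,d\phi^2)$. Let $\kappa_1,\kappa_2,\kappa_3$ be constants and $$K_{kl}=(\kappa_2r^2-2\kappa_3b^2)u_ku_l+(\kappa_1+2\kappa_2r^2+\kappa_3b^2)g_{kl}-\kappa_2r^2\,\chi_k\chi_l,$$ and let $T_{kl}=(\mu+p_\perp)u_ku_l+p_\perp g_{kl}+(p_r-p_\perp)\chi_k\chi_l$ be an anisotropic fluid stress-energy tensor with functions $\mu(r),p_r(r),p_\perp(r)$. Suppose the conformal Killing gravity field equations $R_{kl}-\tfrac12Rg_{kl}=T_{kl}+K_{kl}$ hold. Then $p_r=-\mu$ if and only if there is a constant $\kappa_4$ such that $$\frac{1}{h^2}=\kappa_3r^2+\kappa_4 .$$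
   Context: $u_k$ is the unit timelike covector with components $u_0=-b$ and all others zero; $\chi_k$ is the unit radial covector with $\chi_r=h/b$ and all others zero. $R_{kl}$ is the Ricci tensor and $R$ the scalar curvature of the metric. *)

From Stdlib Require Import Reals.
From Coquelicot Require Import Coquelicot.
Open Scope R_scope.

(* Coordinates x : nat -> R, with x 0 = t, x 1 = r, x 2 = theta, x 3 = phi. *)
Definition upd (x : nat -> R) (i : nat) (s : R) : nat -> R :=
  fun j => if Nat.eqb j i then s else x j.

Definition pderiv (f : (nat -> R) -> R) (i : nat) (x : nat -> R) : R :=
  Derive (fun s => f (upd x i s)) (x i).

Definition sum4 (f : nat -> R) : R := sum_f_R0 f 3.

Definition metric := (nat -> R) -> nat -> nat -> R.

Definition christoffel (g ginv : metric) (a b c : nat) (x : nat -> R) : R :=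
  / 2 * sum4 (fun d => ginv x a d *
      (pderiv (fun y => g y d c) b x + pderiv (fun y => g y d b) c x
       - pderiv (fun y => g y b c) d x)).

Definition ricci (g ginv : metric) (b c : nat) (x : nat -> R) : R :=
  let G := christoffel g ginv in
  sum4 (fun a =>
    pderiv (fun y => G a b c y) a x - pderiv (fun y => G a b a y) c x
    + sum4 (fun d => G a a d x * G d b c x - G a c d x * G d b a x)).

Definition scalar_curv (g ginv : metric) (x : nat -> R) : R :=
  sum4 (fun b => sum4 (fun c => ginv x b c * ricci g ginv b c x)).

Definition sss_diag (b h : R -> R) (x : nat -> R) (i : nat) : R :=
  match i with
  | 0%nat => - (b (x 1%nat))^2
  | 1%nat => (h (x 1%nat))^2 / (b (x 1%nat))^2
  | 2%nat => (x 1%nat)^2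
  | 3%nat => (x 1%nat)^2 * (sin (x 2%nat))^2
  | _ => 0
  end.

Definition sss_metric (b h : R -> R) : metric :=
  fun x i j => if Nat.eqb i j then sss_diag b h x i else 0.

Definition sss_inv (b h : R -> R) : metric :=
  fun x i j => if Nat.eqb i j then / sss_diag b h x i else 0.

Definition u_cov (b : R -> R) (x : nat -> R) (k : nat) : R :=
  if Nat.eqb k 0 then - b (x 1%nat) else 0.
Definition chi_cov (b h : R -> R) (x : nat -> R) (k : nat) : R :=
  if Nat.eqb k 1 then h (x 1%nat) / b (x 1%nat) else 0.

Definition K_tensor (b h : R -> R) (k1 k2 k3 : R) (x : nat -> R) (k l : nat) : R :=
  let r := x 1%nat in
  (k2 * r^2 - 2 * k3 * (b r)^2) * u_cov b x k * u_cov b x l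
  + (k1 + 2 * k2 * r^2 + k3 * (b r)^2) * sss_metric b h x k l
  - k2 * r^2 * chi_cov b h x k * chi_cov b h x l.

Definition T_tensor (b h mu pr pt : R -> R) (x : nat -> R) (k l : nat) : R :=
  let r := x 1%nat in
  (mu r + pt r) * u_cov b x k * u_cov b x l + pt r * sss_metric b h x k l
  + (pr r - pt r) * chi_cov b h x k * chi_cov b h x l.

From Stdlib Require Import Reals Lra Lia.
From Coquelicot Require Import Coquelicot.
Open Scope R_scope.

(* Contract the field equations with n^k n^l, where n = u + chi (indices raised)
   is the radial null vector. Since g(n, n) = 0, every multiple of g drops out,
   including the scalar curvature and kappa_1: T(n, n) = mu + p_r,
   K(n, n) = -2 kappa_3 b^2, and the explicit Ricci components give
   R(n, n) = 2 b^2 h' / (r h^3). So p_r = -mu exactly when h' = -kappa_3 r h^3,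
   i.e. when (1/h^2)' = 2 kappa_3 r, i.e. when 1/h^2 - kappa_3 r^2 is constant. *)

Ltac solve_neq0 :=
  repeat split;
  repeat (apply Rmult_integral_contrapositive_currified || apply Ropp_neq_0_compat
          || apply Rinv_neq_0_compat || apply pow_nonzero || apply R1_neq_R0);
  try assumption.

Ltac fold_eta :=
  repeat match goal with |- context [fun y : R => ?f y] => change (fun y : R => f y) with f end.

Ltac compute_derive :=
  apply is_derive_unique; auto_derive; [solve_neq0 | fold_eta; field; solve_neq0].

Lemma locally_open_interval (r0 r1 x : R) (P : R -> Prop) :
  r0 < x < r1 -> (forall y, r0 < y < r1 -> P y) -> locally x P.
Proof.
  intros [Hx0 Hx1] HP; apply (locally_interval P x r0 r1); try assumption.
  intros y Hy0 Hy1; apply HP; split; assumption.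
Qed.

Lemma pderiv_r_theta (r0 r1 : R) (F : R -> R -> R) (f : (nat -> R) -> R)
    (x : nat -> R) (e : nat) :
  (forall y, r0 < y 1%nat < r1 -> f y = F (y 1%nat) (y 2%nat)) ->
  r0 < x 1%nat < r1 ->
  pderiv f e x =
  match e with
  | 1%nat => Derive (fun r => F r (x 2%nat)) (x 1%nat)
  | 2%nat => Derive (fun th => F (x 1%nat) th) (x 2%nat)
  | _ => 0
  end.
Proof.
  intros Hf Hx; unfold pderiv.
  destruct e as [|[|[|e]]].
  2: { apply Derive_ext_loc, (locally_open_interval r0 r1); [exact Hx|].
       intros r Hr; exact (Hf (upd x 1 r) Hr). }
  2: { apply Derive_ext; intros th; exact (Hf (upd x 2 th) Hx). }
  all: rewrite (Derive_ext _ (fun _ => F (x 1%nat) (x 2%nat)));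
       [apply Derive_const | intros s; rewrite Hf; [reflexivity | exact Hx]].
Qed.

Lemma null_contraction (w0 w1 a0 a1 s g0 g1 c0 c1 A C : R) :
  a0 - s * g0 = c0 -> a1 - s * g1 = c1 -> w0 * g0 + w1 * g1 = 0 ->
  w0 * a0 + w1 * a1 = A -> w0 * c0 + w1 * c1 = C -> A = C.
Proof.
  intros <- <- Hw <- <-.
  transitivity (w0 * a0 + w1 * a1 - s * (w0 * g0 + w1 * g1)); [rewrite Hw |]; ring.
Qed.

Lemma is_derive_inv_sq (f : R -> R) (r : R) :
  ex_derive f r -> f r <> 0 ->
  is_derive (fun s => / f s ^ 2) r (- 2 * Derive f r / f r ^ 3).
Proof.
  intros Df Hf; auto_derive; [solve_neq0 |].
  fold_eta; field; exact Hf.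
Qed.

Lemma is_derive_zero_constant (r0 r1 : R) (f : R -> R) :
  (forall t, r0 < t < r1 -> is_derive f t 0) ->
  forall r s, r0 < r < r1 -> r0 < s < r1 -> f r = f s.
Proof.
  intros Df r s Hr Hs.
  destruct (Rtotal_order r s) as [Hlt | [Heq | Hgt]].
  - apply eq_is_derive; [intros t Ht; apply Df; lra | exact Hlt].
  - rewrite Heq; reflexivity.
  - symmetry; apply eq_is_derive; [intros t Ht; apply Df; lra | exact Hgt].
Qed.

Lemma inv_sq_quadratic_iff (r0 r1 k : R) (h : R -> R) :
  (forall r, r0 < r < r1 -> ex_derive h r) ->
  (forall r, r0 < r < r1 -> h r <> 0) ->
  (forall r, r0 < r < r1 -> Derive h r = - k * r * h r ^ 3) <->
  (exists c, forall r, r0 < r < r1 -> / h r ^ 2 = k * r ^ 2 + c).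
Proof.
  intros Dh Hh; split.
  - intros Hode.
    set (f := fun s => / h s ^ 2 - k * s ^ 2).
    exists (f ((r0 + r1) / 2)); intros r Hr.
    enough (f r = f ((r0 + r1) / 2)) by (unfold f in *; lra).
    apply (is_derive_zero_constant r0 r1); [| exact Hr | lra].
    intros t Ht.
    replace 0 with (- 2 * Derive h t / h t ^ 3 - k * (2 * t))
      by (rewrite Hode by exact Ht; field; apply Hh, Ht).
    apply (is_derive_minus (fun s => / h s ^ 2) (fun s => k * s ^ 2)).
    + apply is_derive_inv_sq; [apply Dh | apply Hh]; exact Ht.
    + auto_derive; [exact I | ring].
  - intros [c Hc] r Hr.
    pose proof (Hh r Hr) as Hhr.
    assert (Hd : - 2 * Derive h r / h r ^ 3 = k * (2 * r)).
    { rewrite <- (is_derive_unique _ _ _ (is_derive_inv_sq h r (Dh r Hr) Hhr)).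
      rewrite (Derive_ext_loc _ (fun s => k * s ^ 2 + c)).
      - apply is_derive_unique; auto_derive; [exact I | ring].
      - apply (locally_open_interval r0 r1); [exact Hr | exact Hc]. }
    replace (Derive h r) with (- 2 * Derive h r / h r ^ 3 * (- h r ^ 3 / 2)) by (field; exact Hhr).
    rewrite Hd; field.
Qed.

(* The metric depends on the coordinates only through r = x 1 and theta = x 2:
   the [_at] functions give its components, their partial derivatives and its
   Christoffel symbols as functions of (r, theta). *)
Definition sss_diag_at (b h : R -> R) (i : nat) (r th : R) : R :=
  match i with
  | 0%nat => - (b r)^2
  | 1%nat => (h r)^2 / (b r)^2
  | 2%nat => r^2
  | 3%nat => r^2 * (sin th)^2
  | _ => 0
  end.

Definition sss_diag_at_dr (b h : R -> R) (i : nat) (r th : R) : R :=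
  match i with
  | 0%nat => - (2 * b r * Derive b r)
  | 1%nat => 2 * h r * Derive h r / b r ^ 2 - 2 * h r ^ 2 * Derive b r / b r ^ 3
  | 2%nat => 2 * r
  | 3%nat => 2 * r * sin th ^ 2
  | _ => 0
  end.

Definition sss_diag_at_dth (b h : R -> R) (i : nat) (r th : R) : R :=
  match i with
  | 3%nat => 2 * r ^ 2 * sin th * cos th
  | _ => 0
  end.

Definition sss_metric_deriv_at (b h : R -> R) (d c e : nat) (r th : R) : R :=
  if Nat.eqb d c then
    match e with
    | 1%nat => sss_diag_at_dr b h d r th
    | 2%nat => sss_diag_at_dth b h d r th
    | _ => 0
    end
  else 0.

Definition sss_christoffel_at (b h : R -> R) (a bb c : nat) (r th : R) : R :=
  / 2 * sum4 (fun d => (if Nat.eqb a d then / sss_diag_at b h a r th else 0) *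
     (sss_metric_deriv_at b h d c bb r th + sss_metric_deriv_at b h d bb c r th
      - sss_metric_deriv_at b h bb c d r th)).

Lemma sss_diag_coords (b h : R -> R) (x : nat -> R) (i : nat) :
  sss_diag b h x i = sss_diag_at b h i (x 1%nat) (x 2%nat).
Proof. destruct i as [|[|[|[|i]]]]; reflexivity. Qed.

Section StaticSphericallySymmetric.

Variables (r0 r1 : R) (b h : R -> R).
Hypothesis b_derivable : forall r, r0 < r < r1 -> ex_derive b r.
Hypothesis h_derivable : forall r, r0 < r < r1 -> ex_derive h r.
Hypothesis b_neq0 : forall r, r0 < r < r1 -> b r <> 0.

Lemma pderiv_sss_metric (x : nat -> R) (d c e : nat) :
  r0 < x 1%nat < r1 ->
  pderiv (fun y => sss_metric b h y d c) e x
  = sss_metric_deriv_at b h d c e (x 1%nat) (x 2%nat).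
Proof.
  intros Hx.
  rewrite (pderiv_r_theta r0 r1
             (fun r th => if Nat.eqb d c then sss_diag_at b h d r th else 0));
    [| intros y _; unfold sss_metric; rewrite sss_diag_coords; reflexivity | exact Hx].
  unfold sss_metric_deriv_at; destruct (Nat.eqb d c);
    [| destruct e as [|[|[|e]]]; try apply Derive_const; reflexivity].
  pose proof (b_derivable _ Hx); pose proof (h_derivable _ Hx); pose proof (b_neq0 _ Hx).
  destruct e as [|[|[|e]]]; try reflexivity;
  destruct d as [|[|[|[|d]]]]; simpl; try apply Derive_const; compute_derive.
Qed.

Lemma christoffel_sss (x : nat -> R) (a bb c : nat) :
  r0 < x 1%nat < r1 ->
  christoffel (sss_metric b h) (sss_inv b h) a bb c x
  = sss_christoffel_at b h a bb c (x 1%nat) (x 2%nat).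
Proof.
  intros Hx; unfold christoffel, sss_christoffel_at; f_equal.
  apply sum_eq; intros d _.
  rewrite !pderiv_sss_metric by exact Hx.
  unfold sss_inv; rewrite sss_diag_coords; reflexivity.
Qed.

Lemma pderiv_christoffel_sss (x : nat -> R) (a bb c e : nat) :
  r0 < x 1%nat < r1 ->
  pderiv (fun y => christoffel (sss_metric b h) (sss_inv b h) a bb c y) e x =
  match e with
  | 1%nat => Derive (fun r => sss_christoffel_at b h a bb c r (x 2%nat)) (x 1%nat)
  | 2%nat => Derive (fun th => sss_christoffel_at b h a bb c (x 1%nat) th) (x 2%nat)
  | _ => 0
  end.
Proof. apply pderiv_r_theta; intros y; apply christoffel_sss. Qed.

Hypothesis Db_derivable : forall r, r0 < r < r1 -> ex_derive (Derive b) r.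
Hypothesis Dh_derivable : forall r, r0 < r < r1 -> ex_derive (Derive h) r.
Hypothesis h_neq0 : forall r, r0 < r < r1 -> h r <> 0.
Hypothesis r0_nonneg : 0 <= r0.

Ltac derive_christoffel_at :=
  repeat match goal with
  | |- context [Derive ?F ?p] =>
      match F with
      | context [sss_christoffel_at] =>
          let Hd := fresh in
          eassert (Hd : Derive F p = _);
          [ unfold sss_christoffel_at, sss_metric_deriv_at, sss_diag_at, sss_diag_at_dr,
              sss_diag_at_dth, sum4; simpl;
            apply is_derive_unique; auto_derive; [solve_neq0 | reflexivity]
          | rewrite Hd; clear Hd ]
      end
  end.

Ltac expand_ricci_sss Hx :=
  pose proof (b_derivable _ Hx); pose proof (h_derivable _ Hx);
  pose proof (Db_derivable _ Hx); pose proof (Dh_derivable _ Hx);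
  pose proof (b_neq0 _ Hx); pose proof (h_neq0 _ Hx);
  unfold ricci, sum4; cbn [sum_f_R0];
  rewrite !pderiv_christoffel_sss, !christoffel_sss by exact Hx;
  derive_christoffel_at;
  unfold sss_christoffel_at, sss_metric_deriv_at, sss_diag_at, sss_diag_at_dr,
    sss_diag_at_dth, sum4;
  simpl; fold_eta.

Lemma ricci_sss_tt (x : nat -> R) :
  r0 < x 1%nat < r1 -> sin (x 2%nat) <> 0 ->
  let r := x 1%nat in
  ricci (sss_metric b h) (sss_inv b h) 0 0 x =
  b r ^ 2 * (Derive b r ^ 2 + b r * Derive (Derive b) r) / h r ^ 2
  - b r ^ 3 * Derive b r * Derive h r / h r ^ 3 + 2 * b r ^ 3 * Derive b r / (r * h r ^ 2).
Proof.
  intros Hx Hs r; subst r.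
  assert (x 1%nat <> 0) by lra.
  expand_ricci_sss Hx; field; solve_neq0.
Qed.

Lemma ricci_sss_rr (x : nat -> R) :
  r0 < x 1%nat < r1 -> sin (x 2%nat) <> 0 ->
  let r := x 1%nat in
  ricci (sss_metric b h) (sss_inv b h) 1 1 x =
  - (Derive b r ^ 2 + b r * Derive (Derive b) r) / b r ^ 2
  + Derive b r * Derive h r / (b r * h r) + 2 * Derive h r / (r * h r)
  - 2 * Derive b r / (r * b r).
Proof.
  intros Hx Hs r; subst r.
  assert (x 1%nat <> 0) by lra.
  expand_ricci_sss Hx; field; solve_neq0.
Qed.

Variables (mu pr pt : R -> R) (k1 k2 k3 : R).
Hypothesis field_equations : forall (x : nat -> R) (k l : nat),
  r0 < x 1%nat < r1 -> 0 < x 2%nat < PI -> (k < 4)%nat -> (l < 4)%nat ->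
  ricci (sss_metric b h) (sss_inv b h) k l x
    - / 2 * scalar_curv (sss_metric b h) (sss_inv b h) x * sss_metric b h x k l
  = T_tensor b h mu pr pt x k l + K_tensor b h k1 k2 k3 x k l.

Lemma radial_null_equation (r : R) :
  r0 < r < r1 ->
  pr r + mu r = 2 * b r ^ 2 * Derive h r / (r * h r ^ 3) + 2 * k3 * b r ^ 2.
Proof.
  intros Hr.
  set (x := fun i : nat => match i with 1%nat => r | 2%nat => PI / 2 | _ => 0 end).
  assert (Hx : r0 < x 1%nat < r1) by exact Hr.
  assert (Hth : 0 < x 2%nat < PI) by (simpl; pose proof PI_RGT_0; lra).
  assert (Hs : sin (x 2%nat) <> 0) by (simpl; rewrite sin_PI2; lra).
  pose proof (b_neq0 _ Hr); pose proof (h_neq0 _ Hr).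
  assert (r <> 0) by lra.
  enough (2 * b r ^ 2 * Derive h r / (r * h r ^ 3) = pr r + mu r - 2 * k3 * b r ^ 2) by lra.
  (* The weights are n^0 n^0 and n^1 n^1 for the null vector n = u + chi with
     raised indices, n = (1/b, b/h, 0, 0). *)
  eapply (null_contraction (/ b r ^ 2) (b r ^ 2 / h r ^ 2)).
  - exact (field_equations x 0 0 Hx Hth ltac:(lia) ltac:(lia)).
  - exact (field_equations x 1 1 Hx Hth ltac:(lia) ltac:(lia)).
  - unfold sss_metric, sss_diag; simpl; field; auto.
  - rewrite (ricci_sss_tt x Hx Hs), (ricci_sss_rr x Hx Hs); simpl; field; auto.
  - unfold T_tensor, K_tensor, u_cov, chi_cov, sss_metric, sss_diag; simpl; field; auto.
Qed.

Lemma radial_null_energy_eq0_iff (r : R) :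
  r0 < r < r1 -> pr r = - mu r <-> Derive h r = - k3 * r * h r ^ 3.
Proof.
  intros Hr.
  pose proof (radial_null_equation r Hr) as E.
  pose proof (b_neq0 _ Hr) as Hb; pose proof (h_neq0 _ Hr) as Hh.
  assert (Hr_neq0 : r <> 0) by lra.
  split; intros Heq.
  - transitivity ((pr r + mu r - 2 * k3 * b r ^ 2) * (r * h r ^ 3 / (2 * b r ^ 2))).
    + rewrite E; field; auto.
    + rewrite Heq; field; auto.
  - enough (pr r + mu r = 0) by lra.
    rewrite E, Heq; field; auto.
Qed.

End StaticSphericallySymmetric.

Theorem proposition6
  (r0 r1 : R) (b h mu pr pt : R -> R) (k1 k2 k3 : R)
  (Hr0 : 0 <= r0) (Hr01 : r0 < r1)
  (Hb_smooth : forall (n : nat) (r : R), r0 < r < r1 -> ex_derive_n b n r)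
  (Hh_smooth : forall (n : nat) (r : R), r0 < r < r1 -> ex_derive_n h n r)
  (Hb_pos : forall r : R, r0 < r < r1 -> 0 < b r)
  (Hh_pos : forall r : R, r0 < r < r1 -> 0 < h r)
  (Hfield : forall (x : nat -> R) (k l : nat),
      r0 < x 1%nat < r1 -> 0 < x 2%nat < PI -> (k < 4)%nat -> (l < 4)%nat ->
      ricci (sss_metric b h) (sss_inv b h) k l x
        - / 2 * scalar_curv (sss_metric b h) (sss_inv b h) x * sss_metric b h x k l
      = T_tensor b h mu pr pt x k l + K_tensor b h k1 k2 k3 x k l) :
  (forall r : R, r0 < r < r1 -> pr r = - mu r) <->
  (exists k4 : R, forall r : R, r0 < r < r1 -> / (h r)^2 = k3 * r^2 + k4).
Proof.
  assert (Db : forall r, r0 < r < r1 -> ex_derive b r) by exact (Hb_smooth 1%nat).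
  assert (Dh : forall r, r0 < r < r1 -> ex_derive h r) by exact (Hh_smooth 1%nat).
  assert (DDb : forall r, r0 < r < r1 -> ex_derive (Derive b) r) by exact (Hb_smooth 2%nat).
  assert (DDh : forall r, r0 < r < r1 -> ex_derive (Derive h) r) by exact (Hh_smooth 2%nat).
  assert (Hb : forall r, r0 < r < r1 -> b r <> 0) by (intros r Hr; specialize (Hb_pos r Hr); lra).
  assert (Hh : forall r, r0 < r < r1 -> h r <> 0) by (intros r Hr; specialize (Hh_pos r Hr); lra).
  pose proof (radial_null_energy_eq0_iff r0 r1 b h Db Dh Hb DDb DDh Hh Hr0
                mu pr pt k1 k2 k3 Hfield) as Hnull.
  rewrite <- (inv_sq_quadratic_iff r0 r1 k3 h Dh Hh).
  split; intros H r Hr; apply (Hnull r Hr), H, Hr.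
Qed.
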